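(* Let $q$ be a prime power, let $\mathcal{F}=(\mathcal{F}_1,\ldots,\mathcal{F}_r)$ be a flag on $\mathbb{F}_{q^n}$ whose best friend is the subfield $\mathbb{F}_{q^m}$, and let $\beta\in\mathbb{F}_{q^n}^*\setminus\mathbb{F}_{q^m}^*$. If the code $\mathrm{Orb}_\beta(\mathcal{F})$ is disjoint, then $2mr\le d_f(\mathrm{Orb}_\beta(\mathcal{F}))$.
   Context: A flag on $\mathbb{F}_{q^n}$ is a sequence $(\mathcal{F}_1,\ldots,\mathcal{F}_r)$ of $\mathbb{F}_q$-subspaces with $\{0\}\subsetneq\mathcal{F}_1\subsetneq\cdots\subsetneq\mathcal{F}_r\subsetneq\mathbb{F}_{q^n}$. For $\beta\in\mathbb{F}_{q^n}^*$ of multiplicative order $|\beta|$, $\mathcal{U}\beta=\{u\beta:u\in\mathcal{U}\}$, $\mathcal{F}\beta=(\mathcal{F}_1\beta,\ldots,\mathcal{F}_r\beta)$ and $\mathrm{Orb}_\beta(\mathcal{F})=\{\mathcal{F}\beta^j:0\le j\le|\beta|-1\}$. A subfield $\mathbb{F}_{q^m}$ is a friend of $\mathcal{F}$ if every $\mathcal{F}_i$ is an $\mathbb{F}_{q^m}$-vector space; the best friend is the largest friend. Subspace distance $d_S(\mathcal{U},\mathcal{V})=\dim(\mathcal{U}+\mathcal{V})-\dim(\mathcal{U}\cap\mathcal{V})$; flag distance $d_f(\mathcal{F},\mathcal{F}')=\sum_i d_S(\mathcal{F}_i,\mathcal{F}'_i)$; the minimum distance of a set of flags is the minimum over distinct pairs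 (and $0$ for a single flag). A set $\mathcal{C}$ of flags is disjoint if the sets $\mathcal{C}_i$ of $i$-th subspaces satisfy $|\mathcal{C}_1|=\cdots=|\mathcal{C}_r|=|\mathcal{C}|$. *)

(* F_q is modelled by an arbitrary finite field F (so q = #|F|
   is a prime power), F_{q^n} by a finite-dimensional field extension L of F
   (n = \dim {:L}); F_q-subspaces of L are {vspace L}, subfields of L
   (containing F_q) are {subfield L}. *)
From HB Require Import structures.
From mathcomp Require Import all_boot all_order all_algebra all_field.
Set Implicit Arguments. Unset Strict Implicit. Unset Printing Implicit Defensive.
Import GRing.Theory.
Local Open Scope ring_scope.

Section Flags.
Variables (F : finFieldType) (L : fieldExtType F).

Definition flag := seq {vspace L}.

Definition vs_proper (U V : {vspace L}) : bool := (U <= V)%VS && (U != V).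

Definition is_flag (f : flag) : bool :=
  path vs_proper 0%VS f && (last 0%VS f != fullv).

Definition vs_scale (U : {vspace L}) (b : L) : {vspace L} := (U * <[b]>)%VS.

Definition flag_scale (f : flag) (b : L) : flag := [seq vs_scale U b | U <- f].

Definition is_mult_order (b : L) (k : nat) : Prop :=
  (0 < k)%N /\ b ^+ k = 1 /\ (forall j, (0 < j < k)%N -> b ^+ j != 1).

Definition orbitb (f : flag) (b : L) (k : nat) : seq flag :=
  undup [seq flag_scale f (b ^+ j) | j <- iota 0 k].

(* K is a friend of f: every F_i is a K-vector space *)
Definition is_friend (f : flag) (K : {subfield L}) : bool :=
  all (fun U => (K * U <= U)%VS) f.

Definition is_best_friend (f : flag) (K : {subfield L}) : Prop :=
  is_friend f K /\ forall K' : {subfield L}, is_friend f K' -> (K' <= K)%VS.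

Definition subspace_dist (U V : {vspace L}) : nat :=
  (\dim (U + V) - \dim (U :&: V))%N.

Definition flag_dist (f g : flag) : nat :=
  \sum_(i < size f) subspace_dist (nth 0%VS f i) (nth 0%VS g i).

(* minimum distance of a set of flags (given as a duplicate-free list);
   0 if there are fewer than two flags *)
Definition min_dist (C : seq flag) : nat :=
  match [seq flag_dist p.1 p.2 | p <- [seq (x, y) | x <- C, y <- C] & p.1 != p.2] with
  | [::] => 0%N
  | d :: ds => foldr minn d ds
  end.

(* C (duplicate-free list of flags of length r) is disjoint:
   |C_1| = ... = |C_r| = |C| *)
Definition disjoint_code (r : nat) (C : seq flag) : bool :=
  all (fun i => size (undup [seq nth 0%VS f i | f <- C]) == size C) (iota 0 r).

End Flags.

(* Every subspace F_i is a vector space over the best friend K = F_{q^m}, and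
   so is every multiple F_i beta^j, with the same dimension.  Two distinct
   K-subspaces A, B of equal dimension satisfy dim (A + B) >= dim A + m, hence
   d_S(A, B) = 2 (dim (A + B) - dim A) >= 2m.  Disjointness makes two distinct
   flags of the orbit differ in each of their r subspaces, giving distance at
   least 2mr.  The orbit does contain two distinct flags: if beta fixed the
   flag, every F_i would be stable under K(beta), a friend strictly larger
   than K. *)
From mathcomp Require Import all_boot all_order all_algebra all_field.
From mathcomp Require Import zify.
Set Implicit Arguments. Unset Strict Implicit. Unset Printing Implicit Defensive.
Local Open Scope ring_scope.
Import GRing.Theory.

Lemma map_uniq_inj_in (T1 T2 : eqType) (g : T1 -> T2) (s : seq T1) :
  uniq (map g s) -> {in s &, injective g}.
Proof.
elim: s => //= z s IH /andP [gz_notin uniq_gs] x y.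
rewrite !in_cons => /predU1P [->|xs] /predU1P [->|ys] gxy //.
- by rewrite gxy map_f in gz_notin.
- by rewrite -gxy map_f in gz_notin.
- exact: IH.
Qed.

Lemma leq_foldr_minn (B d : nat) (ds : seq nat) :
  all (leq B) (d :: ds) -> (B <= foldr minn d ds)%N.
Proof.
case/andP=> Bd; elim: ds => //= e ds IH /andP [Be Bds].
by rewrite leq_min Be IH.
Qed.

Section FieldModules.
Variables (F : fieldType) (L : fieldExtType F) (K : {subfield L}).

Lemma field_module_dim_step (U V : {vspace L}) :
  (K * U <= U)%VS -> (K * V <= V)%VS -> (\dim U < \dim V)%N ->
  (\dim U + \dim K <= \dim V)%N.
Proof.
move=> /field_module_dimS /dvdnP [a ->] /field_module_dimS /dvdnP [c ->].
have dimK_gt0 := adim_gt0 K.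
by rewrite ltn_pmul2r // -mulSnr leq_mul2r => ->; rewrite orbT.
Qed.

Lemma dimv_ltn_addv (U V : {vspace L}) :
  \dim U = \dim V -> U != V -> (\dim U < \dim (U + V))%N.
Proof.
move=> dimUV neqUV; rewrite ltn_neqAle dimvS ?addvSl // andbT.
apply: contra neqUV => /eqP dim_sum.
have UV_eq_U : (U + V == U)%VS.
  by rewrite eq_sym eqEdim addvSl dim_sum leqnn.
by rewrite eq_sym eqEdim dimUV leqnn andbT -(eqP UV_eq_U) addvSr.
Qed.

End FieldModules.

Section Flags.
Variables (F : finFieldType) (L : fieldExtType F).
Implicit Types (f : flag L) (K : {subfield L}) (U V : {vspace L}).

Lemma subspace_dist_field_module K U V :
  (K * U <= U)%VS -> (K * V <= V)%VS -> \dim U = \dim V -> U != V ->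
  (2 * \dim K <= subspace_dist U V)%N.
Proof.
move=> KU KV dimUV neqUV.
have KUV : (K * (U + V) <= U + V)%VS by rewrite prodvDr addvS.
have step : (\dim U + \dim K <= \dim (U + V))%N.
  exact: field_module_dim_step KU KUV (dimv_ltn_addv dimUV neqUV).
have sum_cap := dimv_sum_cap U V.
rewrite /subspace_dist; lia.
Qed.

Lemma vs_scale1 U : vs_scale U 1 = U.
Proof. exact: prodv1. Qed.

Lemma dim_vs_scale U c : c != 0 -> \dim (vs_scale U c) = \dim U.
Proof. exact: dim_cosetv. Qed.

Lemma vs_scale_module K U c :
  (K * U <= U)%VS -> (K * vs_scale U c <= vs_scale U c)%VS.
Proof. by move=> KU; rewrite /vs_scale prodvA prodvSl. Qed.

Lemma flag_scale1 f : flag_scale f 1 = f.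
Proof. by rewrite /flag_scale (eq_map vs_scale1) map_id. Qed.

Lemma nth_flag_scale f c i :
  (i < size f)%N -> nth 0%VS (flag_scale f c) i = vs_scale (nth 0%VS f i) c.
Proof. exact: nth_map. Qed.

Lemma adjoin_module K U b :
  (K * U <= U)%VS -> vs_scale U b = U -> (<<K; b>> * U <= U)%VS.
Proof.
move=> KU Ub_eq_U; apply/prodvP=> x u /Fadjoin_poly_eq <- Uu.
have powb_mul i : b ^+ i * u \in U.
  elim: i => [|i IH]; first by rewrite mul1r.
  by rewrite exprS -mulrA mulrC -Ub_eq_U memv_mul ?memv_line.
rewrite horner_coef mulr_suml; apply: memv_suml => i _.
rewrite -mulrA (subvP KU) // memv_mul //.
exact/polyOverP/Fadjoin_polyOver.
Qed.

Lemma flag_scale_fixed f b :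
  flag_scale f b = f -> {in f, forall U, vs_scale U b = U}.
Proof.
elim: f => //= V f IH [Vb_eq_V /IH fixed] U.
by rewrite in_cons => /predU1P [->|/fixed].
Qed.

Lemma friend_adjoin f K b :
  is_friend f K -> flag_scale f b = f -> is_friend f <<K; b>>%AS.
Proof.
move=> Kf /flag_scale_fixed fixed; apply/allP=> U Uf.
by apply: adjoin_module; [exact: (allP Kf) | exact: fixed].
Qed.

Lemma best_friend_flag_scale_neq f K b :
  is_best_friend f K -> b \notin K -> flag_scale f b != f.
Proof.
case=> Kf K_best bK; apply: contra bK => /eqP fb_eq_f.
exact: subvP (K_best _ (friend_adjoin Kf fb_eq_f)) _ (memv_adjoin K b).
Qed.

Lemma min_dist_ge (C : seq (flag L)) (B : nat) x y :
  x \in C -> y \in C -> x != y ->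
  {in C &, forall x y, x != y -> B <= flag_dist x y}%N -> (B <= min_dist C)%N.
Proof.
move=> xC yC neq_xy C_ge; rewrite /min_dist.
set ds := map _ _.
have ds_xy : flag_dist x y \in ds.
  apply/mapP; exists (x, y) => //; rewrite mem_filter neq_xy.
  by apply/allpairsP; exists (x, y).
have ds_ge : all (leq B) ds.
  apply/allP=> _ /mapP [[u v] + ->]; rewrite mem_filter /=.
  case/andP=> neq_uv /allpairsP [[u' v'] /= [uC vC [eq_u eq_v]]].
  by subst u v; apply: C_ge.
by case: ds ds_xy ds_ge => // d ds _; apply: leq_foldr_minn.
Qed.

Lemma disjoint_code_nth_neq r (C : seq (flag L)) x y i :
  disjoint_code r C -> x \in C -> y \in C -> x != y -> (i < r)%N ->
  nth 0%VS x i != nth 0%VS y i.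
Proof.
move=> disC xC yC neq_xy ltir.
have /eqP size_undup_eq := allP disC i (etrans (mem_iota 0 r i) ltir).
have uniq_nth : uniq [seq nth 0%VS g i | g <- C].
  by rewrite -[uniq _]negbK -ltn_size_undup size_undup_eq size_map ltnn.
by apply: contra neq_xy => /eqP /(map_uniq_inj_in uniq_nth xC yC) ->.
Qed.

Lemma orbitbP f b k x :
  reflect (exists2 j, (j < k)%N & x = flag_scale f (b ^+ j)) (x \in orbitb f b k).
Proof.
rewrite mem_undup; apply: (iffP mapP) => [] [j].
  by rewrite mem_iota => ? ->; exists j.
by move=> ltjk ->; exists j; rewrite ?mem_iota.
Qed.

Lemma mem_orbitb f b k j : (j < k)%N -> flag_scale f (b ^+ j) \in orbitb f b k.
Proof. by move=> ltjk; apply/orbitbP; exists j. Qed.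

Lemma orbitb_flag_dist_ge f K b k x y :
  is_friend f K -> b != 0 -> disjoint_code (size f) (orbitb f b k) ->
  x \in orbitb f b k -> y \in orbitb f b k -> x != y ->
  (2 * \dim K * size f <= flag_dist x y)%N.
Proof.
move=> Kf b0 disC xC yC neq_xy.
have /orbitbP [i _ x_eq] := xC; have /orbitbP [j _ y_eq] := yC.
rewrite /flag_dist x_eq size_map mulnC.
rewrite -[size f in X in (X <= _)%N](card_ord (size f)) -sum_nat_const.
apply: leq_sum => s _.
have neq_s := disjoint_code_nth_neq disC xC yC neq_xy (ltn_ord s).
have KUs := allP Kf _ (mem_nth 0%VS (ltn_ord s)).
rewrite x_eq y_eq !nth_flag_scale // in neq_s *.
by apply: subspace_dist_field_module; rewrite ?vs_scale_module ?dim_vs_scale ?expf_neq0.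
Qed.

End Flags.

Theorem proposition4p20 (F : finFieldType) (L : fieldExtType F)
    (f : flag L) (K : {subfield L}) (b : L) (k : nat) :
  is_flag f ->
  is_best_friend f K ->
  b != 0 -> b \notin K ->
  is_mult_order b k ->
  disjoint_code (size f) (orbitb f b k) ->
  (2 * \dim K * size f <= min_dist (orbitb f b k))%N.
Proof.
move=> _ bestK b0 bK [k_gt0 [bk _]] disC.
have k_gt1 : (1 < k)%N.
  rewrite ltn_neqAle k_gt0 andbT; apply: contra bK => /eqP k1.
  by rewrite -[b]expr1 k1 bk mem1v.
have f_orb : f \in orbitb f b k by have := mem_orbitb f b k_gt0; rewrite flag_scale1.
have fb_orb : flag_scale f b \in orbitb f b k by have := mem_orbitb f b k_gt1.
apply: min_dist_ge f_orb fb_orb _ _.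
  by rewrite eq_sym (best_friend_flag_scale_neq bestK bK).
by move=> x y; apply: orbitb_flag_dist_ge (proj1 bestK) b0 disC.
Qed.
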